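(* Let $\mathbb{K}$ be an algebraically closed field of characteristic $p$, with $p=0$ or $p\ge5$, and let $(\Lambda_1,\Lambda_2,\Lambda_3)$ be a dual $3$-net of conic-line type of order $n$ in $PG(2,\mathbb{K})$, with $n<p$ if $p>0$. Then $(\Lambda_1,\Lambda_2,\Lambda_3)$ realizes a cyclic group $C_n$.
   Context: A dual $3$-net of order $n$ in $PG(2,\mathbb{K})$ is a triple $(\Lambda_1,\Lambda_2,\Lambda_3)$ of pairwise disjoint point sets, each of size $n$, such that every line meeting two distinct components meets each component in exactly one point. It realizes a group $(G,\cdot)$ if there are bijections $\alpha:G\to\Lambda_1$, $\beta:G\to\Lambda_2$, $\gamma:G\to\Lambda_3$ with $a\cdot b=c$ iff $\alpha(a),\beta(b),\gamma(c)$ are collinear. A dual $3$-net of order $n\ge4$ is of conic-line type if two of its components lie on an irreducible conic and the third lies on a line. *)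

From HB Require Import structures.
From mathcomp Require Import all_boot all_order all_algebra all_fingroup all_solvable.
Set Implicit Arguments. Unset Strict Implicit. Unset Printing Implicit Defensive.
Import GRing.Theory.
Local Open Scope ring_scope.

(* Homogeneous coordinates: a point (resp. line) of PG(2,K) is represented by a
   nonzero row vector of K^3, determined up to a nonzero scalar. *)

Section ProjPlane.
Variable K : fieldType.

Definition dot (l v : 'rV[K]_3) : K := \sum_(i < 3) l 0 i * v 0 i.

Definition incident (l v : 'rV[K]_3) : Prop := dot l v = 0.

Definition proportional (u v : 'rV[K]_3) : Prop :=
  exists c : K, c != 0 /\ u = c *: v.

Definition collinear (u v w : 'rV[K]_3) : Prop :=
  exists l : 'rV[K]_3, l != 0 /\ incident l u /\ incident l v /\ incident l w.

Definition dual3net (n : nat) (L : 'I_3 -> 'I_n -> 'rV[K]_3) : Prop :=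
  [/\ (forall k a, L k a != 0),
      (* points are pairwise distinct, within and across components
         (so each component has exactly n points and they are disjoint) *)
      (forall k k' a a', (k, a) != (k', a') -> ~ proportional (L k a) (L k' a')) &
      (forall l : 'rV[K]_3, l != 0 -> forall k1 k2 : 'I_3, k1 != k2 ->
         (exists a, incident l (L k1 a)) -> (exists a, incident l (L k2 a)) ->
         forall k, exists! a, incident l (L k a))].

Definition qform (A : 'M[K]_3) (v : 'rV[K]_3) : K :=
  \sum_(i < 3) \sum_(j < 3) A i j * v 0 i * v 0 j.

Definition qcoef (A : 'M[K]_3) (i j : 'I_3) : K :=
  if i == j then A i i else A i j + A j i.

Definition prodcoef (u v : 'rV[K]_3) (i j : 'I_3) : K :=
  if i == j then u 0 i * v 0 i else u 0 i * v 0 j + u 0 j * v 0 i.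

(* irreducible conic: the quadratic polynomial is nonzero and is not a product
   of two linear forms over K *)
Definition irreducible_conic (A : 'M[K]_3) : Prop :=
  (exists i j : 'I_3, (i <= j)%N /\ qcoef A i j != 0) /\
  ~ (exists u v : 'rV[K]_3,
       forall i j : 'I_3, (i <= j)%N -> qcoef A i j = prodcoef u v i j).

Definition on_conic (A : 'M[K]_3) (n : nat) (P : 'I_n -> 'rV[K]_3) : Prop :=
  forall a, qform A (P a) = 0.

Definition on_line (n : nat) (P : 'I_n -> 'rV[K]_3) : Prop :=
  exists l : 'rV[K]_3, l != 0 /\ forall a, incident l (P a).

Definition c0 : 'I_3 := @Ordinal 3 0 isT.
Definition c1 : 'I_3 := @Ordinal 3 1 isT.
Definition c2 : 'I_3 := @Ordinal 3 2 isT.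

Definition conic_line_type (n : nat) (L : 'I_3 -> 'I_n -> 'rV[K]_3) : Prop :=
  (4 <= n)%N /\
  exists i j k : 'I_3, [/\ i != j, j != k, i != k &
    (exists A : 'M[K]_3, [/\ irreducible_conic A, on_conic A (L i) & on_conic A (L j)])
    /\ on_line (L k)].

Definition realizes (n : nat) (L : 'I_3 -> 'I_n -> 'rV[K]_3)
    (gT : finGroupType) (G : {group gT}) : Prop :=
  exists alpha beta gamma : gT -> 'I_n,
    [/\ {in G &, injective alpha}, {in G &, injective beta},
        {in G &, injective gamma},
        (forall i : 'I_n, [/\ exists2 a, a \in G & alpha a = i,
                              exists2 a, a \in G & beta a = i &
                              exists2 a, a \in G & gamma a = i]) &
        {in G & G, forall a b, {in G, forall c,
           (a * b)%g = c <-> collinear (L c0 (alpha a)) (L c1 (beta b)) (L c2 (gamma c))}}].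

End ProjPlane.

From HB Require Import structures.
From mathcomp Require Import all_boot all_order all_algebra fingroup cyclic.
From mathcomp Require Import ring.
Set Implicit Arguments. Unset Strict Implicit. Unset Printing Implicit Defensive.
Import GRing.Theory.
Local Open Scope ring_scope.

(* Take coordinates [(x : y : z)] w.r.t. a basis [U, V, W] with [U], [V] on the line [l]
   carrying one component and [W] off [l], so that the points off [l] live in the affine
   chart [z = 1] and the points of [l] are directions [(x : y : 0)]. The conic meets [l]
   either in two points (take [U], [V] there) or in one double point [U]. In the first
   case the conic is a hyperbola [x' y' = c] in the chart, and a line through the conic
   points with parameters [s], [s'] meets [l] at a direction determined by [s s']; in
   the second case it is a parabola [x = f(y)] and the direction is determined by
   [y + y']. So the collinearity relation [R a b c] of the net satisfies
   [s1 a * s2 b = s3 c] (resp. [s1 a + s2 b = s3 c]) for injective parameters.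
   As [R] is a Latin square, multiplying by [s1 a / s1 a'] permutes the values of [s2],
   so these ratios are [n]-th roots of unity; discrete logarithms with respect to a
   primitive root then identify [R] with addition in [Z/nZ]. In the additive case the
   same argument shows [n r = 0] for a nonzero [r], impossible as [n < char K]. *)

Lemma ord3P (i : 'I_3) : [\/ i = c0, i = c1 | i = c2].
Proof.
by case: i => [[|[|[|m]]] Hm] //; [apply: Or31|apply: Or32|apply: Or33]; apply: val_inj.
Qed.

Lemma sum_ord3 (V : nmodType) (F : 'I_3 -> V) : \sum_(i < 3) F i = F c0 + F c1 + F c2.
Proof.
rewrite !big_ord_recr big_ord0 /= add0r.
by congr (F _ + F _ + F _); apply: val_inj.
Qed.

(** * Coordinates in the projective plane *)

Section Coordinates.
Variable K : fieldType.
Implicit Types (u v w l : 'rV[K]_3) (A : 'M[K]_3).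

Local Notation "v `0" := (v 0 c0) (at level 2).
Local Notation "v `1" := (v 0 c1) (at level 2).
Local Notation "v `2" := (v 0 c2) (at level 2).

Lemma dotE l v : dot l v = l`0 * v`0 + l`1 * v`1 + l`2 * v`2.
Proof. by rewrite /dot sum_ord3. Qed.

Lemma dotDr l u v : dot l (u + v) = dot l u + dot l v.
Proof. by rewrite !dotE !mxE; ring. Qed.

Lemma dotDl l l' v : dot (l + l') v = dot l v + dot l' v.
Proof. by rewrite !dotE !mxE; ring. Qed.

Lemma dotZl l (c : K) v : dot (c *: l) v = c * dot l v.
Proof. by rewrite !dotE !mxE; ring. Qed.

Lemma qformE A v : qform A v =
  A c0 c0 * v`0 * v`0 + A c0 c1 * v`0 * v`1 + A c0 c2 * v`0 * v`2 +
  A c1 c0 * v`1 * v`0 + A c1 c1 * v`1 * v`1 + A c1 c2 * v`1 * v`2 +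
  A c2 c0 * v`2 * v`0 + A c2 c1 * v`2 * v`1 + A c2 c2 * v`2 * v`2.
Proof. by rewrite /qform sum_ord3 !sum_ord3; ring. Qed.

Lemma qformZ A (c : K) v : qform A (c *: v) = c ^+ 2 * qform A v.
Proof. by rewrite !qformE !mxE; ring. Qed.

Definition polar A u v := qform A (u + v) - qform A u - qform A v.

Lemma row3_neq0 v : v != 0 -> [\/ v`0 != 0, v`1 != 0 | v`2 != 0].
Proof.
move=> hv; have [h0|] := eqVneq v`0 0; last by constructor.
have [h1|] := eqVneq v`1 0; last by constructor.
have [h2|] := eqVneq v`2 0; last by constructor.
by case/eqP: hv; apply/rowP => i; case: (ord3P i) => ->; rewrite mxE.
Qed.

Lemma exists_dot_neq0 l : l != 0 -> exists w, dot l w != 0.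
Proof.
by case/row3_neq0=> h; [exists (delta_mx 0 c0)|exists (delta_mx 0 c1)|exists (delta_mx 0 c2)];
  rewrite dotE !mxE /= ?mulr1 ?mulr0 ?addr0 ?add0r.
Qed.

Definition cross u v : 'rV[K]_3 :=
  \row_i [:: u`1 * v`2 - u`2 * v`1; u`2 * v`0 - u`0 * v`2; u`0 * v`1 - u`1 * v`0]`_i.

Definition triple u v w := dot (cross u v) w.

Lemma crossE u v i : cross u v 0 i =
  [:: u`1 * v`2 - u`2 * v`1; u`2 * v`0 - u`0 * v`2; u`0 * v`1 - u`1 * v`0]`_i.
Proof. by rewrite mxE. Qed.

Lemma tripleE u v w : triple u v w =
  (u`1 * v`2 - u`2 * v`1) * w`0 + (u`2 * v`0 - u`0 * v`2) * w`1 + (u`0 * v`1 - u`1 * v`0) * w`2.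
Proof. by rewrite /triple dotE !crossE. Qed.

Lemma triple_cycle u v w : triple u v w = triple v w u.
Proof. by rewrite !tripleE; ring. Qed.

Lemma dot_crossl u v : dot (cross u v) u = 0.
Proof. by rewrite dotE !crossE /=; ring. Qed.

Lemma dot_crossr u v : dot (cross u v) v = 0.
Proof. by rewrite dotE !crossE /=; ring. Qed.

Lemma cross_crossE u v w i :
  cross (cross u v) w 0 i = dot w u * v 0 i - dot w v * u 0 i.
Proof. by rewrite !dotE; case: (ord3P i) => ->; rewrite !crossE /=; ring. Qed.

Lemma cross_eq0_proportional u v :
  u != 0 -> v != 0 -> cross u v = 0 -> proportional u v.
Proof.
move=> hu hv huv.
have entry i : cross u v 0 i = 0 by rewrite huv mxE.
have := entry c0; have := entry c1; have := entry c2; rewrite !crossE /=.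
move=> /eqP; rewrite subr_eq0 => /eqP m2 /eqP; rewrite subr_eq0 => /eqP m1.
move=> /eqP; rewrite subr_eq0 => /eqP m0.
have minor j k : u 0 j * v 0 k = u 0 k * v 0 j.
  by case: (ord3P j) => ->; case: (ord3P k) => ->; rewrite ?m0 ?m1 ?m2.
suff [k hk] : exists k, v 0 k != 0.
  have uk : u 0 k != 0.
    apply: contraNneq hu => uk; apply/eqP/rowP => j; rewrite mxE.
    by apply: (mulIf hk); rewrite minor uk !mul0r.
  exists (u 0 k / v 0 k); split; first by rewrite mulf_neq0 ?invr_eq0.
  by apply/rowP => j; rewrite !mxE; apply: (mulIf hk); rewrite minor; field.
by case/row3_neq0: hv => h; eexists; exact: h.
Qed.

Lemma cross_neq0 u v : u != 0 -> v != 0 -> ~ proportional u v -> cross u v != 0.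
Proof. by move=> hu hv hp; apply/eqP => /(cross_eq0_proportional hu hv). Qed.

Lemma collinear_triple u v w : collinear u v w -> triple u v w = 0.
Proof.
case=> l [hl [hu [hv hw]]]; move: hu hv hw; rewrite /incident => hu hv hw.
have key i : triple u v w * l 0 i =
    dot l u * cross v w 0 i + dot l v * cross w u 0 i + dot l w * cross u v 0 i.
  by rewrite tripleE !dotE; case: (ord3P i) => ->; rewrite !crossE /=; ring.
by case/row3_neq0: hl => h; apply: (mulIf h); rewrite key hu hv hw; ring.
Qed.

Lemma triple_collinear u v w : triple u v w = 0 -> cross u v != 0 -> collinear u v w.
Proof.
by move=> huvw huv; exists (cross u v); do !split => //; [exact: dot_crossl|exact: dot_crossr].
Qed.

Lemma triple_neq0_off_line l u v w : l != 0 -> u != 0 -> v != 0 -> ~ proportional u v ->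
  dot l u = 0 -> dot l v = 0 -> dot l w != 0 -> triple u v w != 0.
Proof.
move=> hl hu hv huv lu lv lw.
suff [c [c_neq0 e]] : proportional (cross u v) l by rewrite /triple e dotZl mulf_neq0.
apply: cross_eq0_proportional (cross_neq0 hu hv huv) hl _.
by apply/rowP => i; rewrite cross_crossE lu lv !mul0r subrr mxE.
Qed.

Definition reducible_form A := exists u w, forall v, qform A v = dot u v * dot w v.

Lemma dot_delta u i : dot u (delta_mx 0 i) = u 0 i.
Proof. by rewrite dotE; case: (ord3P i) => ->; rewrite !mxE /=; ring. Qed.

Lemma qform_delta A i : qform A (delta_mx 0 i) = A i i.
Proof. by rewrite qformE; case: (ord3P i) => ->; rewrite !mxE /=; ring. Qed.

Lemma polar_delta A i j : i != j -> polar A (delta_mx 0 i) (delta_mx 0 j) = A i j + A j i.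
Proof.
by case: (ord3P i) => ->; case: (ord3P j) => -> // _;
  rewrite /polar !qformE !mxE /=; ring.
Qed.

Lemma irreducible_conic_form A : irreducible_conic A -> ~ reducible_form A.
Proof.
case=> _ hirr [u [w H]]; apply: hirr; exists u, w => i j _.
rewrite /qcoef /prodcoef; have [_|hij] := eqVneq i j.
  by rewrite -qform_delta H !dot_delta.
by rewrite -polar_delta // /polar !H !dotDr !dot_delta; ring.
Qed.

End Coordinates.

(** * Affine charts and the conic *)

Section Basis.
Variables (K : fieldType) (U V W : 'rV[K]_3).
Implicit Types (A : 'M[K]_3) (l P Q R : 'rV[K]_3).

Definition comb (x y z : K) := x *: U + y *: V + z *: W.

Lemma combE x y z i : comb x y z 0 i = x * U 0 i + y * V 0 i + z * W 0 i.
Proof. by rewrite !mxE. Qed.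

Lemma combZ c x y z : comb (c * x) (c * y) (c * z) = c *: comb x y z.
Proof. by apply/rowP => i; rewrite !mxE; ring. Qed.

Lemma combD x y z x' y' z' :
  comb x y z + comb x' y' z' = comb (x + x') (y + y') (z + z').
Proof. by apply/rowP => i; rewrite !mxE; ring. Qed.

Lemma comb001 : comb 0 0 1 = W.
Proof. by apply/rowP => i; rewrite !mxE; ring. Qed.

Lemma dot_comb l x y z : dot l (comb x y z) = x * dot l U + y * dot l V + z * dot l W.
Proof. by rewrite !dotE !combE; ring. Qed.

Lemma qform_comb A x y z : qform A (comb x y z) =
  x ^+ 2 * qform A U + y ^+ 2 * qform A V + z ^+ 2 * qform A W +
  x * y * polar A U V + x * z * polar A U W + y * z * polar A V W.
Proof. by rewrite /polar !qformE !combE !mxE; ring. Qed.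

Lemma triple_comb p1 p2 p3 q1 q2 q3 r1 r2 r3 :
  triple (comb p1 p2 p3) (comb q1 q2 q3) (comb r1 r2 r3) =
  (p1 * (q2 * r3 - q3 * r2) - p2 * (q1 * r3 - q3 * r1) + p3 * (q1 * r2 - q2 * r1))
  * triple U V W.
Proof. by rewrite !tripleE !combE; ring. Qed.

Hypothesis basisUVW : triple U V W != 0.

Definition coord1 P := triple P V W / triple U V W.
Definition coord2 P := triple U P W / triple U V W.
Definition coord3 P := triple U V P / triple U V W.

Lemma comb_coord P : P = comb (coord1 P) (coord2 P) (coord3 P).
Proof.
apply/rowP => i; move: basisUVW; rewrite combE /coord1 /coord2 /coord3 !tripleE => hD.
by case: (ord3P i) => ->; field.
Qed.

Lemma coord_dot P :
  [/\ coord1 P = dot ((triple U V W)^-1 *: cross V W) P,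
      coord2 P = dot ((triple U V W)^-1 *: cross W U) P &
      coord3 P = dot ((triple U V W)^-1 *: cross U V) P].
Proof. by rewrite /coord1 /coord2 /coord3 !dotZl !tripleE !dotE !crossE /=; split; ring. Qed.

Lemma reducible_comb A (a1 a2 a3 b1 b2 b3 : K) :
  (forall x y z, qform A (comb x y z) =
     (a1 * x + a2 * y + a3 * z) * (b1 * x + b2 * y + b3 * z)) ->
  reducible_form A.
Proof.
set D := triple U V W => H.
exists (a1 *: (D^-1 *: cross V W) + a2 *: (D^-1 *: cross W U) + a3 *: (D^-1 *: cross U V)).
exists (b1 *: (D^-1 *: cross V W) + b2 *: (D^-1 *: cross W U) + b3 *: (D^-1 *: cross U V)).
move=> P; have [e1 e2 e3] := coord_dot P.
by rewrite {1}(comb_coord P) H e1 e2 e3 !dotDl !dotZl.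
Qed.

Section Chart.
Variable l : 'rV[K]_3.
Hypotheses (lU : dot l U = 0) (lV : dot l V = 0) (lW : dot l W != 0).

Lemma dot_line P : dot l P = coord3 P * dot l W.
Proof. by rewrite {1}(comb_coord P) dot_comb lU lV; ring. Qed.

Lemma coord3_neq0 P : dot l P != 0 -> coord3 P != 0.
Proof. by apply: contraNneq => h; rewrite dot_line h mul0r. Qed.

Lemma coord3_eq0 P : dot l P = 0 -> coord3 P = 0.
Proof. by move=> /eqP; rewrite dot_line mulf_eq0 (negbTE lW) orbF => /eqP. Qed.

(* Affine coordinates of the points off [l], and the direction of the points of [l]. *)
Definition chartx P := coord1 P / coord3 P.
Definition charty P := coord2 P / coord3 P.
Definition slope R := coord1 R / coord2 R.

Lemma comb_chart P : dot l P != 0 -> P = coord3 P *: comb (chartx P) (charty P) 1.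
Proof.
move/coord3_neq0 => h3; rewrite -combZ {1}(comb_coord P) /chartx /charty.
by congr comb; field.
Qed.

Lemma comb_line R : dot l R = 0 -> R = comb (coord1 R) (coord2 R) 0.
Proof. by move/coord3_eq0 => h3; rewrite {1}(comb_coord R) h3. Qed.

Lemma qform_chart A P : dot l P != 0 ->
  qform A P = coord3 P ^+ 2 * qform A (comb (chartx P) (charty P) 1).
Proof. by move/comb_chart => {1}->; rewrite qformZ. Qed.

Lemma chart_proportional P Q : dot l P != 0 -> dot l Q != 0 ->
  chartx P = chartx Q -> charty P = charty Q -> proportional P Q.
Proof.
move=> hP hQ ex ey; have hP3 := coord3_neq0 hP; have hQ3 := coord3_neq0 hQ.
exists (coord3 P / coord3 Q); split; first by rewrite mulf_neq0 ?invr_eq0.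
move: (comb_chart hP) (comb_chart hQ); rewrite ex ey.
set p3 := coord3 P; set q3 := coord3 Q => eP eQ.
by rewrite [LHS]eP [in RHS]eQ scalerA divfK.
Qed.

Lemma slope_proportional R R' : dot l R = 0 -> dot l R' = 0 ->
  coord2 R != 0 -> coord2 R' != 0 -> slope R = slope R' -> proportional R R'.
Proof.
move=> hR hR' h2 h2'; rewrite /slope; move: (comb_line hR) (comb_line hR') h2 h2'.
set r1 := coord1 R; set r2 := coord2 R; set r1' := coord1 R'; set r2' := coord2 R'.
move=> eR eR' h2 h2' hs; exists (r2 / r2'); split; first by rewrite mulf_neq0 ?invr_eq0.
rewrite [LHS]eR [in RHS]eR' -combZ mulr0; congr comb; last by field.
by rewrite -[r1](divfK h2) hs; field.
Qed.

Lemma triple_chart P Q R : dot l P != 0 -> dot l Q != 0 -> dot l R = 0 ->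
  triple P Q R = coord3 P * coord3 Q * triple U V W *
    ((charty P - charty Q) * coord1 R - (chartx P - chartx Q) * coord2 R).
Proof.
move=> hP hQ hR; have hP3 := coord3_neq0 hP; have hQ3 := coord3_neq0 hQ.
rewrite [in LHS](comb_coord P) [in LHS](comb_coord Q) [in LHS](comb_line hR).
rewrite triple_comb /chartx /charty.
by field; rewrite hP3 hQ3.
Qed.

Lemma chart_collinear P Q R : dot l P != 0 -> dot l Q != 0 -> dot l R = 0 ->
  triple P Q R = 0 ->
  (charty P - charty Q) * coord1 R = (chartx P - chartx Q) * coord2 R.
Proof.
move=> hP hQ hR hPQR; apply/eqP; rewrite -subr_eq0; apply/eqP.
apply: (@mulfI _ (coord3 P * coord3 Q * triple U V W)).
  by apply: mulf_neq0; [apply: mulf_neq0|]; try apply: coord3_neq0.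
by rewrite mulr0 -triple_chart.
Qed.

Lemma line_coord_eq0 R : dot l R = 0 -> coord1 R = 0 -> coord2 R = 0 -> R = 0.
Proof.
move=> hR h1 h2; rewrite (comb_line hR) h1 h2.
by apply/rowP => i; rewrite combE !mxE; ring.
Qed.

End Chart.

End Basis.

Section BinaryForms.
Variable K : closedFieldType.

Definition bform (a h d x y : K) := a * x ^+ 2 + h * x * y + d * y ^+ 2.

Lemma bform_factor a h d : exists al be ga de : K, forall x y,
  bform a h d x y = (al * x + be * y) * (ga * x + de * y).
Proof.
rewrite /bform; have [->|ha] := eqVneq a 0.
  by exists 0, 1, h, d => x y; ring.
have [r hr] := @solve_monicpoly K 2 (nth 0 [:: - d / a; - h / a]) isT.
rewrite !big_ord_recr big_ord0 /= add0r expr0 mulr1 expr1 in hr.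
exists a, (- a * r), 1, (h / a + r) => x y.
have -> : d = - a * r ^+ 2 - h * r by rewrite hr; field.
by field.
Qed.

(* Either two independent roots, or a double root [u]: the polar form then vanishes
   at [(u, v)]. *)
Lemma bform_roots a h d : [|| a != 0, h != 0 | d != 0] ->
  exists u1 u2 v1 v2 : K, [/\ u1 * v2 - u2 * v1 != 0, bform a h d u1 u2 = 0 &
    bform a h d v1 v2 = 0 \/
    (bform a h d (u1 + v1) (u2 + v2) - bform a h d u1 u2 - bform a h d v1 v2 = 0 /\
     bform a h d v1 v2 != 0)].
Proof.
move=> hq; have [al [be [ga [de F]]]] := bform_factor a h d.
have q_neq0 : ~ (forall x y, bform a h d x y = 0).
  move=> q0; have ea : a = 0 by rewrite -(q0 1 0) /bform; ring.
  have ed : d = 0 by rewrite -(q0 0 1) /bform; ring.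
  have eh : h = 0 by rewrite -(q0 1 1) /bform ea ed; ring.
  by move: hq; rewrite ea eh ed eqxx.
have [hgu|hgu] := eqVneq (ga * be - de * al) 0; last first.
  exists be, (- al), de, (- ga); rewrite !F; split; [|ring|by left; ring].
  by rewrite (_ : _ - _ = - (ga * be - de * al)) ?oppr_eq0 //; ring.
have [v1 [v2 hfv]] : exists v1 v2, al * v1 + be * v2 != 0.
  have [al0|] := eqVneq al 0; last by exists 1, 0; rewrite mulr1 mulr0 addr0.
  have [be0|] := eqVneq be 0; last by exists 0, 1; rewrite mulr1 mulr0 add0r.
  by exfalso; apply: q_neq0 => x y; rewrite F al0 be0; ring.
have hgv : ga * v1 + de * v2 != 0.
  apply/eqP => hgv; apply: q_neq0 => x y; rewrite F.
  have hdet : be * v2 + al * v1 != 0 by rewrite addrC.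
  have -> : ga = 0.
    apply: (mulIf hdet); rewrite mul0r.
    transitivity ((ga * be - de * al) * v2 + (ga * v1 + de * v2) * al); first by ring.
    by rewrite hgu hgv; ring.
  have -> : de = 0.
    apply: (mulIf hdet); rewrite mul0r.
    transitivity ((ga * v1 + de * v2) * be - (ga * be - de * al) * v1); first by ring.
    by rewrite hgu hgv; ring.
  by ring.
exists be, (- al), v1, v2; rewrite !F; split.
- by apply: contra hfv => /eqP <-; apply/eqP; ring.
- by ring.
right; split; last by rewrite mulf_neq0.
by transitivity ((al * v1 + be * v2) * (ga * be - de * al)); [ring|rewrite hgu mulr0].
Qed.

End BinaryForms.

Section Secant.
Variables (K : fieldType) (A : 'M[K]_3) (l U V W : 'rV[K]_3).
Hypotheses (hA : ~ reducible_form A) (basisUVW : triple U V W != 0)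
  (lU : dot l U = 0) (lV : dot l V = 0) (lW : dot l W != 0)
  (AU : qform A U = 0) (AV : qform A V = 0).

Let b := polar A U V.
Let e := polar A U W.
Let g := polar A V W.
Let k := qform A W.

Lemma qform_secant x y z :
  qform A (comb U V W x y z) = x * y * b + x * z * e + y * z * g + z ^+ 2 * k.
Proof. by rewrite qform_comb AU AV /b /e /g /k; ring. Qed.

Lemma secant_polar_neq0 : b != 0.
Proof.
apply/eqP => b0; apply: hA; apply: (reducible_comb basisUVW (a1 := 0) (a2 := 0) (a3 := 1)
  (b1 := e) (b2 := g) (b3 := k)) => x y z.
by rewrite qform_secant b0; ring.
Qed.

(* In the chart, the conic is the hyperbola [(x + g/b) (y + e/b) = secant_const]. *)
Definition secant_const := (e * g / b - k) / b.
Definition secant_param P := chartx U V W P + g / b.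

Lemma secant_const_neq0 : secant_const != 0.
Proof.
have hb := secant_polar_neq0; apply/eqP => c0.
have hk : k = e * g / b.
  apply/eqP; rewrite eq_sym -subr_eq0; apply/eqP.
  by apply: (mulIf (invr_neq0 hb)); rewrite mul0r.
apply: hA; apply: (reducible_comb basisUVW (a1 := b) (a2 := 0) (a3 := g)
  (b1 := 0) (b2 := 1) (b3 := e / b)) => x y z.
by rewrite qform_secant hk; field.
Qed.

Lemma secant_chart P : qform A P = 0 -> dot l P != 0 ->
  secant_param P * (charty U V W P + e / b) = secant_const.
Proof.
move=> hP hlP; have hb := secant_polar_neq0.
move: hP; rewrite (qform_chart basisUVW lU lV A hlP) qform_secant => /eqP.
rewrite mulf_eq0 expf_eq0 (negbTE (coord3_neq0 basisUVW lU lV hlP)) andbF /=.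
rewrite /secant_param /secant_const; set x := chartx _ _ _ _; set y := charty _ _ _ _.
move=> /eqP h; apply/eqP; rewrite -subr_eq0; apply/eqP.
by rewrite -[RHS](mulr0 b^-1) -h; field.
Qed.

Lemma secant_param_neq0 P : qform A P = 0 -> dot l P != 0 -> secant_param P != 0.
Proof.
move=> hP hlP; apply: contraNneq secant_const_neq0 => s0.
by rewrite -(secant_chart hP hlP) s0 mul0r.
Qed.

Lemma secant_charty P : qform A P = 0 -> dot l P != 0 ->
  charty U V W P = secant_const / secant_param P - e / b.
Proof.
move=> hP hlP; have hs := secant_param_neq0 hP hlP.
have hb := secant_polar_neq0.
by rewrite -(secant_chart hP hlP); field; rewrite hb hs.
Qed.

Lemma secant_param_proportional P Q : qform A P = 0 -> qform A Q = 0 ->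
  dot l P != 0 -> dot l Q != 0 -> secant_param P = secant_param Q -> proportional P Q.
Proof.
move=> hP hQ hlP hlQ hs; apply: (chart_proportional basisUVW lU lV) => //.
  by apply: (addIr (g / b)).
by rewrite !secant_charty // hs.
Qed.

Lemma secant_collinear P Q R : qform A P = 0 -> qform A Q = 0 ->
  dot l P != 0 -> dot l Q != 0 -> ~ proportional P Q ->
  R != 0 -> dot l R = 0 -> triple P Q R = 0 ->
  coord2 U V W R != 0 /\
  secant_param P * secant_param Q = - secant_const * slope U V W R.
Proof.
move=> hP hQ hlP hlQ hPQ hR hlR hPQR.
have hc := secant_const_neq0; have hb := secant_polar_neq0.
have h1 := secant_param_neq0 hP hlP; have h2 := secant_param_neq0 hQ hlQ.
have := chart_collinear basisUVW lU lV lW hlP hlQ hlR hPQR.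
rewrite !secant_charty // (_ : chartx _ _ _ _ = secant_param P - g / b) //; last by rewrite addrK.
rewrite (_ : chartx _ _ _ Q = secant_param Q - g / b); last by rewrite addrK.
set s1 := secant_param P in h1 *; set s2 := secant_param Q in h2 *.
set c := secant_const in hc *; set r1 := coord1 U V W R; set r2 := coord2 U V W R => hr.
have hs : s1 - s2 != 0.
  by rewrite subr_eq0; apply/eqP => /(secant_param_proportional hP hQ hlP hlQ).
have key : c * r1 + s1 * s2 * r2 = 0.
  apply: (mulIf hs); rewrite mul0r.
  transitivity (- s1 * s2 * ((c / s1 - e / b - (c / s2 - e / b)) * r1
                              - (s1 - g / b - (s2 - g / b)) * r2)).
    by field; rewrite h1 h2 hb.
  by rewrite hr subrr mulr0.
have r2_neq0 : r2 != 0.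
  apply: contraNneq hR => r20; apply/eqP; apply: (line_coord_eq0 basisUVW lU lV lW hlR) => //.
  by move: key; rewrite r20 mulr0 addr0 => /eqP; rewrite mulf_eq0 (negbTE hc) => /eqP.
split=> //; rewrite /slope -/r1 -/r2.
by apply: (mulIf r2_neq0); rewrite -[RHS]addr0 -key; field.
Qed.

End Secant.

Section Tangent.
Variables (K : closedFieldType) (A : 'M[K]_3) (l U V W : 'rV[K]_3).
Hypotheses (hA : ~ reducible_form A) (basisUVW : triple U V W != 0)
  (lU : dot l U = 0) (lV : dot l V = 0) (lW : dot l W != 0)
  (AU : qform A U = 0) (AUV : polar A U V = 0) (AV : qform A V != 0).

Let d := qform A V.
Let e := polar A U W.
Let g := polar A V W.
Let k := qform A W.

Lemma qform_tangent x y z :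
  qform A (comb U V W x y z) = y ^+ 2 * d + x * z * e + y * z * g + z ^+ 2 * k.
Proof. by rewrite qform_comb AU AUV /d /e /g /k; ring. Qed.

Lemma tangent_polar_neq0 : e != 0.
Proof.
apply/eqP => e0; apply: hA; have [al [be [ga [de F]]]] := bform_factor d g k.
apply: (reducible_comb basisUVW (a1 := 0) (a2 := al) (a3 := be)
  (b1 := 0) (b2 := ga) (b3 := de)) => x y z.
rewrite qform_tangent e0; transitivity (bform d g k y z); first by rewrite /bform; ring.
by rewrite F; ring.
Qed.

(* In the chart, the conic is the parabola [x = tangent_curve y]. *)
Definition tangent_curve t := - (d * t ^+ 2 + g * t + k) / e.

Lemma tangent_chartx P : qform A P = 0 -> dot l P != 0 ->
  chartx U V W P = tangent_curve (charty U V W P).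
Proof.
move=> hP hlP; have he := tangent_polar_neq0.
move: hP; rewrite (qform_chart basisUVW lU lV A hlP) qform_tangent => /eqP.
rewrite mulf_eq0 expf_eq0 (negbTE (coord3_neq0 basisUVW lU lV hlP)) andbF /=.
rewrite /tangent_curve; set x := chartx _ _ _ _; set y := charty _ _ _ _.
move=> /eqP h; apply/eqP; rewrite -subr_eq0; apply/eqP.
by rewrite -[RHS](mulr0 e^-1) -h; field.
Qed.

Lemma tangent_param_proportional P Q : qform A P = 0 -> qform A Q = 0 ->
  dot l P != 0 -> dot l Q != 0 -> charty U V W P = charty U V W Q -> proportional P Q.
Proof.
move=> hP hQ hlP hlQ ht; apply: (chart_proportional basisUVW lU lV) => //.
by rewrite !tangent_chartx // ht.
Qed.

Lemma tangent_collinear P Q R : qform A P = 0 -> qform A Q = 0 ->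
  dot l P != 0 -> dot l Q != 0 -> ~ proportional P Q ->
  R != 0 -> dot l R = 0 -> triple P Q R = 0 ->
  coord2 U V W R != 0 /\
  charty U V W P + charty U V W Q = - (e * slope U V W R + g) / d.
Proof.
move=> hP hQ hlP hlQ hPQ hR hlR hPQR; have he := tangent_polar_neq0.
have := chart_collinear basisUVW lU lV lW hlP hlQ hlR hPQR.
rewrite !tangent_chartx //.
set t1 := charty U V W P; set t2 := charty U V W Q.
set r1 := coord1 U V W R; set r2 := coord2 U V W R => hr.
have ht : t1 - t2 != 0.
  by rewrite subr_eq0; apply/eqP => /(tangent_param_proportional hP hQ hlP hlQ).
have key : e * r1 + (d * (t1 + t2) + g) * r2 = 0.
  apply: (mulIf ht); rewrite mul0r.
  transitivity (e * ((t1 - t2) * r1 - (tangent_curve t1 - tangent_curve t2) * r2)).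
    by rewrite /tangent_curve; field.
  by rewrite hr subrr mulr0.
have r2_neq0 : r2 != 0.
  apply: contraNneq hR => r20; apply/eqP; apply: (line_coord_eq0 basisUVW lU lV lW hlR) => //.
  by move: key; rewrite r20 mulr0 addr0 => /eqP; rewrite mulf_eq0 (negbTE he) => /eqP.
split=> //; rewrite /slope -/r1 -/r2.
have hd : d != 0 := AV.
by apply: (mulIf (mulf_neq0 hd r2_neq0)); rewrite -[RHS]addr0 -key; field; rewrite hd r2_neq0.
Qed.

End Tangent.

Lemma secant_or_tangent (K : closedFieldType) (A : 'M[K]_3) (l Z0 Z1 : 'rV[K]_3) :
  ~ reducible_form A -> l != 0 -> Z0 != 0 -> Z1 != 0 -> ~ proportional Z0 Z1 ->
  dot l Z0 = 0 -> dot l Z1 = 0 ->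
  exists U V W, [/\ triple U V W != 0, dot l U = 0, dot l V = 0, dot l W != 0 &
    qform A U = 0 /\ (qform A V = 0 \/ polar A U V = 0 /\ qform A V != 0)].
Proof.
move=> hA hl hZ0 hZ1 hZ01 lZ0 lZ1; have [W lW] := exists_dot_neq0 hl.
have D : triple Z0 Z1 W != 0 by apply: triple_neq0_off_line hl _ _ _ _ _ _.
pose q := bform (qform A Z0) (polar A Z0 Z1) (qform A Z1).
have qline x y : qform A (comb Z0 Z1 W x y 0) = q x y.
  by rewrite qform_comb /q /bform; ring.
have [|u1 [u2 [v1 [v2 [det qu qv]]]]] :=
    @bform_roots _ (qform A Z0) (polar A Z0 Z1) (qform A Z1).
  apply: contraT; rewrite !negb_or !negbK => /and3P[/eqP a0 /eqP h0 /eqP d0]; exfalso; apply: hA.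
  apply: (reducible_comb D (a1 := 0) (a2 := 0) (a3 := 1)
    (b1 := polar A Z0 W) (b2 := polar A Z1 W) (b3 := qform A W)) => x y z.
  by rewrite qform_comb a0 h0 d0; ring.
exists (comb Z0 Z1 W u1 u2 0), (comb Z0 Z1 W v1 v2 0), W; split.
- rewrite -{3}(comb001 Z0 Z1 W) triple_comb mulf_neq0 //.
  by apply: contra det => /eqP <-; apply/eqP; ring.
- by rewrite dot_comb lZ0 lZ1; ring.
- by rewrite dot_comb lZ0 lZ1; ring.
- by [].
by rewrite /polar combD addr0 !qline; split.
Qed.

(** * Parametrizing the collinearity relation *)

Definition mul_representable (K : fieldType) n (R : 'I_n -> 'I_n -> 'I_n -> Prop) :=
  exists s1 s2 s3 : 'I_n -> K, [/\ injective s1, injective s2, injective s3,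
    (forall a, s1 a != 0 /\ s2 a != 0) & forall a b c, R a b c -> s1 a * s2 b = s3 c].

Definition add_representable (K : fieldType) n (R : 'I_n -> 'I_n -> 'I_n -> Prop) :=
  exists s1 s2 s3 : 'I_n -> K, [/\ injective s1, injective s2, injective s3 &
    forall a b c, R a b c -> s1 a + s2 b = s3 c].

Section ConicLineNet.
Variables (K : closedFieldType) (A : 'M[K]_3) (l : 'rV[K]_3) (n : nat).
Variables (X Y Z : 'I_n -> 'rV[K]_3).
Hypotheses (hA : ~ reducible_form A) (hl : l != 0).
Hypotheses (X_conic : forall a, qform A (X a) = 0) (Y_conic : forall b, qform A (Y b) = 0).
Hypotheses (X_off : forall a, dot l (X a) != 0) (Y_off : forall b, dot l (Y b) != 0).
Hypotheses (Z_on : forall c, dot l (Z c) = 0) (Z_neq0 : forall c, Z c != 0).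
Hypotheses (X_inj : forall a a', proportional (X a) (X a') -> a = a')
  (Y_inj : forall b b', proportional (Y b) (Y b') -> b = b')
  (Z_inj : forall c c', proportional (Z c) (Z c') -> c = c').
Hypotheses (XY : forall a b, ~ proportional (X a) (Y b))
  (XYZ : forall b c, exists a, triple (X a) (Y b) (Z c) = 0).

Local Notation R := (fun a b c => triple (X a) (Y b) (Z c) = 0).

Lemma line_representation U V W (op : K -> K -> K) (phi : 'rV[K]_3 -> K) (psi : K -> K) :
  triple U V W != 0 -> dot l U = 0 -> dot l V = 0 -> dot l W != 0 -> injective psi ->
  (forall P Q R, qform A P = 0 -> qform A Q = 0 -> dot l P != 0 -> dot l Q != 0 ->
     ~ proportional P Q -> R != 0 -> dot l R = 0 -> triple P Q R = 0 ->
     coord2 U V W R != 0 /\ op (phi P) (phi Q) = psi (slope U V W R)) ->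
  exists s3 : 'I_n -> K, injective s3 /\
    forall a b c, R a b c -> op (phi (X a)) (phi (Y b)) = s3 c.
Proof.
move=> D lU lV lW psi_inj hcol.
have hcolXYZ a b c : R a b c -> coord2 U V W (Z c) != 0 /\
    op (phi (X a)) (phi (Y b)) = psi (slope U V W (Z c)).
  by apply: hcol; rewrite ?X_conic ?Y_conic ?X_off ?Y_off ?Z_on ?Z_neq0 ?XY.
have Z2 c : coord2 U V W (Z c) != 0.
  by have [a /hcolXYZ []] := XYZ c c.
exists (fun c => psi (slope U V W (Z c))); split; last by move=> a b c /hcolXYZ [].
move=> c c' /psi_inj hs; apply: Z_inj.
exact: (slope_proportional D lU lV lW (Z_on c) (Z_on c') (Z2 c) (Z2 c') hs).
Qed.

Lemma secant_representation U V W :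
  triple U V W != 0 -> dot l U = 0 -> dot l V = 0 -> dot l W != 0 ->
  qform A U = 0 -> qform A V = 0 -> mul_representable K R.
Proof.
move=> D lU lV lW AU AV.
have hc : - secant_const A U V W != 0 by rewrite oppr_eq0 secant_const_neq0.
have [s3 [s3_inj hs3]] := line_representation D lU lV lW
  (mulfI hc) (secant_collinear hA D lU lV lW AU AV).
exists (fun a => secant_param A U V W (X a)), (fun b => secant_param A U V W (Y b)), s3.
split=> //.
- move=> a a' /(secant_param_proportional hA D lU lV AU AV (X_conic a) (X_conic a')).
  by move/(_ (X_off a) (X_off a'))/X_inj.
- move=> b b' /(secant_param_proportional hA D lU lV AU AV (Y_conic b) (Y_conic b')).
  by move/(_ (Y_off b) (Y_off b'))/Y_inj.
- by move=> a; split; apply: (secant_param_neq0 hA D lU lV AU AV).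
Qed.

Lemma tangent_representation U V W :
  triple U V W != 0 -> dot l U = 0 -> dot l V = 0 -> dot l W != 0 ->
  qform A U = 0 -> polar A U V = 0 -> qform A V != 0 -> add_representable K R.
Proof.
move=> D lU lV lW AU AUV AV.
have he := tangent_polar_neq0 hA D AU AUV.
have psi_inj : injective (fun r => - (polar A U W * r + polar A V W) / qform A V).
  move=> r r' /(mulIf (invr_neq0 AV)) /oppr_inj /addIr /(mulfI he); exact.
have [s3 [s3_inj hs3]] := line_representation D lU lV lW psi_inj
  (tangent_collinear hA D lU lV lW AU AUV AV).
exists (fun a => charty U V W (X a)), (fun b => charty U V W (Y b)), s3; split=> //.
- move=> a a' /(tangent_param_proportional hA D lU lV AU AUV (X_conic a) (X_conic a')).
  by move/(_ (X_off a) (X_off a'))/X_inj.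
- move=> b b' /(tangent_param_proportional hA D lU lV AU AUV (Y_conic b) (Y_conic b')).
  by move/(_ (Y_off b) (Y_off b'))/Y_inj.
Qed.

Lemma conic_line_representation (z0 z1 : 'I_n) : z0 != z1 ->
  mul_representable K R \/ add_representable K R.
Proof.
move=> z01; have Z01 : ~ proportional (Z z0) (Z z1) by move/Z_inj/eqP; exact/negP.
have [U [V [W [D lU lV lW [AU [AV|[AUV AV]]]]]]] :=
  secant_or_tangent hA hl (Z_neq0 z0) (Z_neq0 z1) Z01 (Z_on z0) (Z_on z1).
- by left; apply: (secant_representation D lU lV lW).
- by right; apply: (tangent_representation D lU lV lW).
Qed.

End ConicLineNet.

(** * Latin relations represented in a field *)

(* The hypothesis makes [x |-> s x * r] (resp. [s x + r]) a permutation of the image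
   of [s]; compare the product (resp. sum) of that image with itself. *)
Section StableImage.
Variables (K : fieldType) (T : finType) (s : T -> K) (r : K).
Hypothesis s_inj : injective s.

Lemma mulr_stable_unity_root : (forall x, s x != 0) -> r != 0 ->
  (forall x, exists y, s y = s x * r) -> #|T|.-unity_root r.
Proof.
move=> s_neq0 r_neq0 /fin_all_exists [f hf].
have f_inj : injective f by move=> x y fxy; apply/s_inj/(mulIf r_neq0); rewrite -!hf fxy.
have prod_neq0 : \prod_x s x != 0 by apply/prodf_neq0 => x _.
rewrite unity_rootE; apply/eqP/(mulIf prod_neq0); rewrite mul1r.
rewrite [in RHS](reindex_inj f_inj) /=.
by under [in RHS]eq_bigr => x _ do rewrite hf; rewrite big_split /= prodr_const mulrC.
Qed.

Lemma addr_stable_eq0 : (forall x, exists y, s y = s x + r) -> r *+ #|T| = 0.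
Proof.
move=> /fin_all_exists [f hf].
have f_inj : injective f by move=> x y fxy; apply/s_inj/(addIr r); rewrite -!hf fxy.
apply: (@addrI _ (\sum_x s x)); rewrite addr0 [in RHS](reindex_inj f_inj) /=.
by under [in RHS]eq_bigr => x _ do rewrite hf; rewrite big_split /= sumr_const.
Qed.

End StableImage.

Lemma add_representation_char (K : fieldType) n (R : 'I_n -> 'I_n -> 'I_n -> Prop) :
  (1 < n)%N -> (forall a b, exists c, R a b c) -> (forall a c, exists b, R a b c) ->
  add_representable K R -> n%:R = 0 :> K.
Proof.
move=> n_gt1 R_ab R_ac [s1 [s2 [s3 [s1_inj s2_inj _ s_add]]]].
pose a0 : 'I_n := Ordinal (ltnW n_gt1); pose a1 : 'I_n := Ordinal n_gt1.
have r_neq0 : s1 a0 - s1 a1 != 0 by rewrite subr_eq0 (inj_eq s1_inj).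
have stable b : exists b', s2 b' = s2 b + (s1 a0 - s1 a1).
  have [c hc] := R_ab a0 b; have [b' hb'] := R_ac a1 c; exists b'.
  by apply: (addrI (s1 a1)); rewrite (s_add _ _ _ hb') -(s_add _ _ _ hc); ring.
move/eqP: (addr_stable_eq0 s2_inj stable); rewrite card_ord -[_ *+ n]mulr_natr.
by rewrite mulf_eq0 (negbTE r_neq0) => /eqP.
Qed.

Section RootIndex.
Variables (F : fieldType) (m : nat) (w : F).
Local Notation n := m.+1.
Hypothesis w_prim : n.-primitive_root w.

(* The discrete logarithm of [x] in base [w]; junk value [0] if [x] is not a power of [w]. *)
Definition root_index (x : F) : 'I_n := odflt ord0 [pick i : 'I_n | w ^+ i == x].

Lemma root_indexK x : n.-unity_root x -> w ^+ root_index x = x.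
Proof.
rewrite unity_rootE => /eqP /(prim_rootP w_prim) [i ->].
by rewrite /root_index; case: pickP => [j /eqP //|/(_ i)]; rewrite eqxx.
Qed.

Lemma expr_ord_inj : injective (fun i : 'I_n => w ^+ i).
Proof.
move=> i j /eqP; rewrite (eq_prim_root_expr w_prim) !modn_small ?ltn_ord //.
by move=> /eqP /val_inj.
Qed.

Lemma expr_ordD (i j : 'I_n) : w ^+ (i + j)%R = w ^+ i * w ^+ j.
Proof. by rewrite -exprD -(prim_expr_mod w_prim (i + j)). Qed.

End RootIndex.

Section MulRepresentation.
Variables (K : fieldType) (m : nat) (R : 'I_m.+1 -> 'I_m.+1 -> 'I_m.+1 -> Prop).
Local Notation n := m.+1.
Hypotheses (R_ab : forall a b, exists c, R a b c) (R_bc : forall b c, exists a, R a b c)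
  (R_ac : forall a c, exists b, R a b c).
Variables (s1 s2 s3 : 'I_n -> K).
Hypotheses (s1_inj : injective s1) (s2_inj : injective s2) (s3_inj : injective s3)
  (s_neq0 : forall a, s1 a != 0 /\ s2 a != 0)
  (s_mul : forall a b c, R a b c -> s1 a * s2 b = s3 c).

Let s1_neq0 a : s1 a != 0. Proof. by case: (s_neq0 a). Qed.
Let s2_neq0 b : s2 b != 0. Proof. by case: (s_neq0 b). Qed.

Lemma s1_ratio_unity a a' : n.-unity_root (s1 a / s1 a').
Proof.
rewrite -[n]card_ord; apply: (mulr_stable_unity_root s2_inj s2_neq0).
  by rewrite mulf_neq0 ?invr_eq0.
move=> b; have [c hc] := R_ab a b; have [b' hb'] := R_ac a' c; exists b'.
by apply: (mulfI (s1_neq0 a')); rewrite (s_mul hb') -(s_mul hc); field.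
Qed.

Lemma s2_ratio_unity b b' : n.-unity_root (s2 b / s2 b').
Proof.
rewrite -[n]card_ord; apply: (mulr_stable_unity_root s1_inj s1_neq0).
  by rewrite mulf_neq0 ?invr_eq0.
move=> a; have [c hc] := R_ab a b; have [a' ha'] := R_bc b' c; exists a'.
by apply: (mulIf (s2_neq0 b')); rewrite (s_mul ha') -(s_mul hc); field.
Qed.

Lemma s3_ratio_unity c : n.-unity_root (s3 c / (s1 ord0 * s2 ord0)).
Proof.
have [a ha] := R_bc ord0 c; rewrite -(s_mul ha).
rewrite (_ : _ / _ = s1 a / s1 ord0); first exact: s1_ratio_unity.
by field; rewrite s1_neq0 s2_neq0.
Qed.

(* The [n] distinct ratios [s1 a / s1 0] are all the [n]-th roots of unity. *)
Lemma exists_prim_root : exists w : K, n.-primitive_root w.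
Proof.
have /hasP [w _ hw] : has n.-primitive_root [seq s1 a / s1 ord0 | a <- enum 'I_n].
  apply: has_prim_root => //.
  - by apply/allP => _ /mapP [a _ ->]; exact: s1_ratio_unity.
  - rewrite map_inj_uniq ?enum_uniq // => a a' /(mulIf _) h.
    by apply: s1_inj; apply: h; rewrite invr_eq0.
  - by rewrite size_map size_enum_ord.
by exists w.
Qed.

Lemma mul_representation_Zp : exists eX eY eZ : 'I_n -> 'I_n,
  [/\ injective eX, injective eY, injective eZ &
      forall a b c, R a b c -> (eX a + eY b)%R = eZ c].
Proof.
have [w hw] := exists_prim_root.
have eX a := root_indexK hw (s1_ratio_unity a ord0).
have eY b := root_indexK hw (s2_ratio_unity b ord0).
have eZ c := root_indexK hw (s3_ratio_unity c).
exists (fun a => root_index m w (s1 a / s1 ord0)), (fun b => root_index m w (s2 b / s2 ord0)),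
  (fun c => root_index m w (s3 c / (s1 ord0 * s2 ord0))); split.
- move=> a a' h; apply/s1_inj/(mulIf (invr_neq0 (s1_neq0 ord0))).
  by rewrite -(eX a) -(eX a') h.
- move=> b b' h; apply/s2_inj/(mulIf (invr_neq0 (s2_neq0 ord0))).
  by rewrite -(eY b) -(eY b') h.
- move=> c c' h; have s12_neq0 := mulf_neq0 (s1_neq0 ord0) (s2_neq0 ord0).
  apply/s3_inj/(mulIf (invr_neq0 s12_neq0)).
  by rewrite -(eZ c) -(eZ c') h.
move=> a b c habc; apply: (expr_ord_inj hw).
rewrite /= expr_ordD // eX eY eZ -(s_mul habc).
by field; rewrite s1_neq0 s2_neq0.
Qed.

End MulRepresentation.

Lemma mul_representable_Zp (K : fieldType) m (R : 'I_m.+1 -> 'I_m.+1 -> 'I_m.+1 -> Prop) :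
  (forall a b, exists c, R a b c) -> (forall b c, exists a, R a b c) ->
  (forall a c, exists b, R a b c) -> mul_representable K R ->
  exists eX eY eZ : 'I_m.+1 -> 'I_m.+1, [/\ injective eX, injective eY, injective eZ &
    forall a b c, R a b c <-> (eX a + eY b)%R = eZ c].
Proof.
move=> R_ab R_bc R_ac [s1 [s2 [s3 [s1_inj s2_inj s3_inj s_neq0 s_mul]]]].
have [eX [eY [eZ [eX_inj eY_inj eZ_inj hR]]]] :=
  mul_representation_Zp R_ab R_bc R_ac s1_inj s2_inj s3_inj s_neq0 s_mul.
exists eX, eY, eZ; split=> // a b c; split; first exact: hR.
move=> habc; have [c' hc'] := R_ab a b; suff <- : c' = c by [].
by apply: eZ_inj; rewrite -(hR _ _ _ hc').
Qed.

(** * Dual 3-nets *)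

Lemma ord3_cover (i j k : 'I_3) : i != j -> j != k -> i != k ->
  forall t, [\/ t = i, t = j | t = k].
Proof.
move=> + + + t.
by case: (ord3P i) => ->; case: (ord3P j) => ->; case: (ord3P k) => ->;
  case: (ord3P t) => -> // _ _ _; first [exact: Or31 | exact: Or32 | exact: Or33].
Qed.

Lemma sum_perm3 (V : nmodType) (F : 'I_3 -> V) i j k : i != j -> j != k -> i != k ->
  F i + F j + F k = F c0 + F c1 + F c2.
Proof.
move=> ij jk ik; rewrite -sum_ord3 (perm_big [:: i; j; k]) /=.
  by rewrite !big_cons big_nil addr0 addrA.
apply: uniq_perm; rewrite ?index_enum_uniq //=.
  by rewrite !inE negb_or ij ik jk.
move=> t; rewrite mem_index_enum !inE.
by case: (ord3_cover ij jk ik t) => ->; rewrite eqxx ?orbT.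
Qed.

Lemma collinear_perm (K : fieldType) (P : 'I_3 -> 'rV[K]_3) i j k :
  i != j -> j != k -> i != k ->
  collinear (P i) (P j) (P k) <-> collinear (P c0) (P c1) (P c2).
Proof.
move=> ij jk ik.
have incident_all (s t u : 'I_3) : (forall x, [\/ x = s, x = t | x = u]) ->
    collinear (P s) (P t) (P u) -> exists2 l, l != 0 & forall x, incident l (P x).
  by move=> cover [l [hl [hs [ht hu]]]]; exists l => // x; case: (cover x) => ->.
split=> [/(incident_all _ _ _ (ord3_cover ij jk ik))|/(incident_all c0 c1 c2 ord3P)] [l hl H].
  by exists l.
by exists l.
Qed.

Section Net.
Variables (K : fieldType) (n : nat) (L : 'I_3 -> 'I_n -> 'rV[K]_3).
Hypothesis hnet : dual3net L.

Lemma net_neq0 t a : L t a != 0.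
Proof. by case: hnet. Qed.

Lemma net_not_proportional t t' a a' : (t, a) != (t', a') ->
  ~ proportional (L t a) (L t' a').
Proof. by case: hnet => _ + _; apply. Qed.

Lemma net_inj t a a' : proportional (L t a) (L t a') -> a = a'.
Proof.
move=> taa'; have [//|aa'] := eqVneq a a'.
by case: (net_not_proportional _ taa'); rewrite xpair_eqE eqxx aa'.
Qed.

Lemma net_cross_neq0 t t' a a' : t != t' -> cross (L t a) (L t' a') != 0.
Proof.
move=> tt'; apply: cross_neq0 (net_neq0 _ _) (net_neq0 _ _) (net_not_proportional _).
by rewrite xpair_eqE negb_and tt'.
Qed.

Lemma net_collinear_triple t1 t2 t3 a b c : t1 != t2 ->
  collinear (L t1 a) (L t2 b) (L t3 c) <-> triple (L t1 a) (L t2 b) (L t3 c) = 0.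
Proof.
move=> t12; split; first exact: collinear_triple.
by move/triple_collinear; apply; apply: net_cross_neq0.
Qed.

Lemma net_third t1 t2 t3 a b : t1 != t2 ->
  exists c, triple (L t1 a) (L t2 b) (L t3 c) = 0.
Proof.
move=> t12; case: hnet => _ _ /(_ _ (net_cross_neq0 a b t12) t1 t2 t12) lines.
have [c [hc _]] := lines (ex_intro _ a (dot_crossl _ _)) (ex_intro _ b (dot_crossr _ _)) t3.
by exists c.
Qed.

Lemma net_latin i j k : i != j -> j != k -> i != k ->
  [/\ forall a b, exists c, triple (L i a) (L j b) (L k c) = 0,
      forall b c, exists a, triple (L i a) (L j b) (L k c) = 0 &
      forall a c, exists b, triple (L i a) (L j b) (L k c) = 0].
Proof.
move=> ij jk ik; split=> [a b|b c|a c]; first exact: net_third.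
  by have [a ha] := net_third i b c jk; exists a; rewrite triple_cycle.
have [b /(net_collinear_triple j a c b ik) [l' [hl' [ha [hc hb]]]]] := net_third j a c ik.
by exists b; apply: collinear_triple; exists l'.
Qed.

Lemma net_off_line (l : 'rV[K]_3) t k : (1 < n)%N -> l != 0 -> t != k ->
  (forall c, incident l (L k c)) -> forall a, dot l (L t a) != 0.
Proof.
move=> n_gt1 hl tk lk a; apply/eqP => la.
pose z0 : 'I_n := Ordinal (ltnW n_gt1); pose z1 : 'I_n := Ordinal n_gt1.
case: hnet => _ _ /(_ l hl t k tk (ex_intro _ a la) (ex_intro _ z0 (lk _)) k) [c [_ uniq_c]].
by have := uniq_c z1 (lk _); rewrite (uniq_c z0 (lk _)) => /(congr1 val).
Qed.

End Net.

Lemma realizes_Zp (K : fieldType) m (L : 'I_3 -> 'I_m.+1 -> 'rV[K]_3)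
    (h : 'I_3 -> 'I_m.+1 -> 'I_m.+1) :
  (forall t, injective (h t)) ->
  (forall a b c, collinear (L c0 a) (L c1 b) (L c2 c) <-> (h c0 a + h c1 b + h c2 c)%R = 0) ->
  realizes L [set: 'I_m.+1]%G.
Proof.
move=> h_inj hcol; have h2N_inj : injective (fun c => - h c2 c) by move=> c c' /oppr_inj/h_inj.
exists (invF (h_inj c0)), (invF (h_inj c1)), (invF h2N_inj); split.
- by move=> a b _ _ /(can_inj (f_invF _)).
- by move=> a b _ _ /(can_inj (f_invF _)).
- by move=> a b _ _ /(can_inj (f_invF _)).
- by move=> x; split; [exists (h c0 x) | exists (h c1 x) | exists (- h c2 x)];
    rewrite ?inE ?invF_f.
move=> a b _ _ c _; rewrite hcol !f_invF.
have /eqP : - h c2 (invF h2N_inj c) = c := f_invF h2N_inj c.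
rewrite eqr_oppLR => /eqP ->; change ((a + b)%R = c <-> a + b - c = 0).
by split=> [<-|/eqP]; [exact: subrr | rewrite subr_eq0 => /eqP].
Qed.

Lemma realizes_of_triple_Zp (K : fieldType) m (L : 'I_3 -> 'I_m.+1 -> 'rV[K]_3) i j k
    (eX eY eZ : 'I_m.+1 -> 'I_m.+1) :
  dual3net L -> i != j -> j != k -> i != k ->
  injective eX -> injective eY -> injective eZ ->
  (forall a b c, triple (L i a) (L j b) (L k c) = 0 <-> (eX a + eY b)%R = eZ c) ->
  realizes L [set: 'I_m.+1]%G.
Proof.
move=> hnet ij jk ik eX_inj eY_inj eZ_inj hR.
pose h t := if t == i then eX else if t == j then eY else fun c => - eZ c.
have [hi hj hk] : [/\ h i = eX, h j = eY & h k = fun c => - eZ c].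
  by rewrite /h eqxx eq_sym (negbTE ij) eqxx eq_sym (negbTE ik) eq_sym (negbTE jk).
apply: (realizes_Zp (h := h)).
  move=> t; case: (ord3_cover ij jk ik t) => ->; rewrite ?hi ?hj ?hk //.
  by move=> c c' /oppr_inj /eZ_inj.
move=> a b c; pose x t := nth a [:: a; b; c] t.
rewrite -[collinear _ _ _]/(collinear (L c0 (x c0)) (L c1 (x c1)) (L c2 (x c2))).
rewrite -(collinear_perm (fun t => L t (x t)) ij jk ik) /= net_collinear_triple // hR.
rewrite -[h c0 a + _ + _]/(h c0 (x c0) + h c1 (x c1) + h c2 (x c2)).
rewrite -(sum_perm3 (fun t => h t (x t)) ij jk ik) /= hi hj hk /=.
by split=> [->|/eqP]; [exact: subrr | rewrite subr_eq0 => /eqP].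
Qed.

Theorem proposition4p11 (K : closedFieldType) (n : nat)
    (L : 'I_3 -> 'I_n -> 'rV[K]_3)
    (hchar : [pchar K] =i pred0 \/ exists p : nat, p \in [pchar K] /\ (5 <= p)%N)
    (hnp : forall p : nat, p \in [pchar K] -> (n < p)%N)
    (hnet : dual3net L)
    (hcl : conic_line_type L) :
  exists (gT : finGroupType) (G : {group gT}),
    [/\ cyclic G, #|G| = n & realizes L G].
Proof.
case: n L hnp hnet hcl => [|m] L hnp hnet [n_ge4 hcl]; first by [].
have [i [j [k [ij jk ik [[A [hA Li Lj]] [l [hl Lk]]]]]]] := hcl.
have n_gt1 : (1 < m.+1)%N by apply: leq_trans n_ge4.
have [R_ab R_bc R_ac] := net_latin hnet ij jk ik.
have Lij a b : ~ proportional (L i a) (L j b).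
  by apply: (net_not_proportional hnet); rewrite xpair_eqE negb_and ij.
have [hmul|hadd] := conic_line_representation (irreducible_conic_form hA) hl Li Lj
  (net_off_line hnet n_gt1 hl ik Lk) (net_off_line hnet n_gt1 hl jk Lk) Lk
  (net_neq0 hnet k) (@net_inj _ _ _ hnet i) (@net_inj _ _ _ hnet j) (@net_inj _ _ _ hnet k)
  Lij R_bc (isT : ord0 != Ordinal n_gt1).
  have [eX [eY [eZ [eX_inj eY_inj eZ_inj hR]]]] := mul_representable_Zp R_ab R_bc R_ac hmul.
  exists 'I_m.+1, [set: 'I_m.+1]%G; split; last exact: realizes_of_triple_Zp hR.
    by apply/cyclicP; exists Zp1; exact: Zp_cycle.
  by rewrite cardsT card_ord.
have /eqP n0 := add_representation_char n_gt1 R_ab R_ac hadd.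
have [p charp] := natf0_pchar (ltnW n_gt1) n0.
by have := hnp p charp; rewrite ltnNge dvdn_leq // (dvdn_pcharf charp).
Qed.
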